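(* Let $G=(V,w,m)$ be a locally finite measured weighted graph, let $x_0\neq y_0\in V$ with $d(x_0,y_0)<\infty$, and let $\varepsilon>0$ be such that $d(x_0,y_0)\,\kappa(x_0,y_0)\le\varepsilon$. Then there exists an optimal transport plan $\rho:B_1(x_0)\times B_1(y_0)\to[0,\infty)$ for the pair $(x_0,y_0)$ such that $$\sum_{\substack{x\in B_1(x_0),\ y\in B_1(y_0)\\ d(x,y)>d(x_0,y_0)}}\rho(x,y)\ \ge\ \frac{q_{\min}-\varepsilon}{2},$$ where $q_{\min}:=\inf_{x\sim y}q(x,y)$.
   Context: A measured weighted graph $G=(V,w,m)$ consists of a countable set $V$, a symmetric $w:V\times V\to[0,\infty)$ vanishing on the diagonal, and $m:V\to(0,\infty)$; $x\sim y$ iff $w(x,y)>0$; locally finite means each vertex has finitely many neighbours. $q(x,y):=w(x,y)/m(x)$, $\Delta f(x):=\sum_y q(x,y)(f(y)-f(x))$. $d$ is the combinatorial graph distance, $B_1(x)=\{z:d(x,z)\le1\}$, $S_1(x)=\{z:d(x,z)=1\}$. For $x\ne y$, $\nabla_{xy}f:=(f(x)-f(y))/d(x,y)$, $\|\nabla f\|_\infty:=\sup_{x\sim y}\nabla_{xy}f$, and the Ollivier curvature is $\kappa(x,y):=\inf\{\nabla_{xy}\Delta f: \nabla_{yx}f=1,\ \|\nabla f\|_\infty=1\}$. A transport plan for $(x_0,y_0)$ is any $\rho:B_1(x_0)\times B_1(y_0)\to[0,\infty)$ with $\sum_{y\in B_1(y_0)}\rho(x,y)=q(x_0,x)$ for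 all $x\in S_1(x_0)$ and $\sum_{x\in B_1(x_0)}\rho(x,y)=q(y_0,y)$ for all $y\in S_1(y_0)$ (no condition is imposed at $x_0$ or $y_0$, and $\rho$ need not be a probability measure). It is known that $\kappa(x_0,y_0)=\sup_\rho\sum_{x,y}\rho(x,y)\big[1-\frac{d(x,y)}{d(x_0,y_0)}\big]$ over all transport plans; a transport plan attaining this supremum is called optimal. *)

From HB Require Import structures.
From mathcomp Require Import all_boot all_order all_algebra.
From mathcomp Require Import all_classical all_reals.
From mathcomp Require Import constructive_ereal ereal.
Set Implicit Arguments. Unset Strict Implicit. Unset Printing Implicit Defensive.
Import Order.TTheory GRing.Theory Num.Theory.
Local Open Scope classical_set_scope.
Local Open Scope ring_scope.

Definition mw_graph {R : realType} {V : countType} (w : V -> V -> R) (m : V -> R) : Prop :=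
  (forall x y, 0 <= w x y) /\ (forall x y, w x y = w y x) /\
  (forall x, w x x = 0) /\ (forall x, 0 < m x).

Definition locally_finite {R : realType} {V : countType} (w : V -> V -> R) : Prop :=
  forall x, finite_set [set y | 0 < w x y].

Definition qq {R : realType} {V : countType} (w : V -> V -> R) (m : V -> R) (x y : V) : R :=
  w x y / m x.

Inductive walk {R : realType} {V : countType} (w : V -> V -> R) : nat -> V -> V -> Prop :=
| walk0 x : walk w 0 x x
| walkS n x z y : walk w n x z -> 0 < w z y -> walk w n.+1 x y.

Definition gdist {R : realType} {V : countType} (w : V -> V -> R) (x y : V) : \bar R :=
  ereal_inf [set (n%:R)%:E | n in [set n | walk w n x y]].

Definition ball1 {R : realType} {V : countType} (w : V -> V -> R) (x : V) : set V :=
  [set z | (gdist w x z <= 1%:E)%E].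

Definition sphere1 {R : realType} {V : countType} (w : V -> V -> R) (x : V) : set V :=
  [set z | gdist w x z = 1%:E].

Definition grad {R : realType} {V : countType} (w : V -> V -> R) (f : V -> R) (x y : V) : R :=
  (f x - f y) / fine (gdist w x y).

Definition gradnorm {R : realType} {V : countType} (w : V -> V -> R) (f : V -> R) : \bar R :=
  ereal_sup [set (grad w f xy.1 xy.2)%:E | xy in [set xy : V * V | 0 < w xy.1 xy.2]].

Definition laplacian {R : realType} {V : countType} (w : V -> V -> R) (m : V -> R)
  (f : V -> R) (x : V) : R :=
  \sum_(y \in [set y | 0 < w x y]) qq w m x y * (f y - f x).

Definition kappa {R : realType} {V : countType} (w : V -> V -> R) (m : V -> R) (x y : V) : \bar R :=
  ereal_inf [set (grad w (laplacian w m f) x y)%:E |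
             f in [set f : V -> R | grad w f y x = 1 /\ gradnorm w f = 1%:E]].

Definition transport_plan {R : realType} {V : countType} (w : V -> V -> R) (m : V -> R)
  (x0 y0 : V) (rho : V -> V -> R) : Prop :=
  (forall x y, ball1 w x0 x -> ball1 w y0 y -> 0 <= rho x y) /\
  (forall x, sphere1 w x0 x -> \sum_(y \in ball1 w y0) rho x y = qq w m x0 x) /\
  (forall y, sphere1 w y0 y -> \sum_(x \in ball1 w x0) rho x y = qq w m y0 y).

Definition plan_cost {R : realType} {V : countType} (w : V -> V -> R)
  (x0 y0 : V) (rho : V -> V -> R) : R :=
  \sum_(x \in ball1 w x0) \sum_(y \in ball1 w y0)
     rho x y * (1 - fine (gdist w x y) / fine (gdist w x0 y0)).

Definition optimal_plan {R : realType} {V : countType} (w : V -> V -> R) (m : V -> R)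
  (x0 y0 : V) (rho : V -> V -> R) : Prop :=
  transport_plan w m x0 y0 rho /\
  forall rho', transport_plan w m x0 y0 rho' -> plan_cost w x0 y0 rho' <= plan_cost w x0 y0 rho.

Definition qmin {R : realType} {V : countType} (w : V -> V -> R) (m : V -> R) : \bar R :=
  ereal_inf [set (qq w m xy.1 xy.2)%:E | xy in [set xy : V * V | 0 < w xy.1 xy.2]].

From HB Require Import structures.
From mathcomp Require Import all_boot all_order all_algebra.
From mathcomp Require Import all_classical all_reals.
From mathcomp Require Import constructive_ereal ereal.
From mathcomp Require Import finmap topology normedtype derive.
From mathcomp Require Import lra zify.
Import Order.TTheory GRing.Theory Num.Theory.
Import ArrowAsProduct numFieldNormedType.Exports.
Local Open Scope classical_set_scope.
Local Open Scope ring_scope.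
Set Implicit Arguments. Unset Strict Implicit. Unset Printing Implicit Defensive.

(* Let [d = d(x0, y0)] and let [x1] be the neighbour of [x0] on a geodesic to
   [y0].  An optimal plan exists by compactness.  Moving the mass that an
   optimal plan puts on the pairs [(x1, y)] with [d(x1, y) = d] to [(x0, y)],
   and the same total mass onto [(x1, y0)], keeps the marginals and does not
   decrease the cost, so some optimal plan [rho] puts the whole mass
   [q(x0, x1)] of the row of [x1] on pairs at distance [< d].  In
   [d * cost(rho) = sum rho(x, y) (d - d(x, y))] these pairs contribute at
   least [q(x0, x1)], the pairs at distance [> d] (at most [d + 2]) at least
   [-2] times their mass, and the others nonnegatively; together with the weak
   duality [d * cost(rho) <= d * kappa <= eps] this gives the bound. *)

Lemma sum_pick {R : nmodType} {I : eqType} (s : seq I) (a : I) (F : I -> R) :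
  uniq s -> a \in s -> \sum_(i <- s) (if i == a then F i else 0) = F a.
Proof.
move=> s_uniq a_s; rewrite (bigD1_seq a) //= eqxx big1 ?addr0 //.
by move=> i /negbTE ->.
Qed.

Lemma ler_sum_term {R : numDomainType} {I : eqType} (s : seq I) (a : I) (F : I -> R) :
  uniq s -> a \in s -> (forall i, i \in s -> 0 <= F i) -> F a <= \sum_(i <- s) F i.
Proof.
move=> s_uniq a_s F_ge0; rewrite (bigD1_seq a) //= lerDl big_seq_cond.
by apply: sumr_ge0 => i /andP[/F_ge0].
Qed.

Lemma continuous_sum {R : numFieldType} {T : topologicalType} {I : Type}
    (s : seq I) (g : I -> T -> R) :
  (forall i, continuous (g i)) -> continuous (fun t => \sum_(i <- s) g i t).
Proof.
elim: s => [|i s IH] g_cont.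
  have -> : (fun t => \sum_(i <- [::]) g i t) = cst 0.
    by apply: funext => t; rewrite big_nil.
  exact: cst_continuous.
have -> : (fun t => \sum_(j <- i :: s) g j t) = g i + fun t => \sum_(j <- s) g j t.
  by apply: funext => t; rewrite big_cons.
by move=> t; apply: continuousD; [exact: g_cont | exact: IH].
Qed.

Section Walks.
Context {R : realType} {V : countType} (w : V -> V -> R).

Lemma walk_cat n k x z y : walk w n x z -> walk w k z y -> walk w (n + k) x y.
Proof.
move=> wxz wzy; elim: wzy wxz => [a|j a b c _ IH wbc] wxa; first by rewrite addn0.
by rewrite addnS; apply: walkS (IH wxa) wbc.
Qed.

Lemma walk0_eq x y : walk w 0 x y -> x = y.
Proof. by move=> h; inversion h. Qed.

Lemma walk1_gt0 x y : walk w 1 x y -> 0 < w x y.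
Proof. by move=> h; inversion h; subst; move/walk0_eq: H0 => ->. Qed.

Lemma edge_walk1 x y : 0 < w x y -> walk w 1 x y.
Proof. exact: walkS (walk0 _ _). Qed.

Lemma walk_lipschitz (f : V -> R) n x y :
  (forall a b, 0 < w a b -> f b - f a <= 1) -> walk w n x y -> f y - f x <= n%:R.
Proof.
move=> f_lip; elim=> [a|j a b c _ IH wbc]; first by rewrite subrr.
have := f_lip _ _ wbc; rewrite -addn1 natrD; lra.
Qed.

Definition reachable x y := exists n, walk w n x y.

(* Junk value: [walk_dist x y = 0] when [y] is not reachable from [x]. *)
Definition walk_dist x y : nat :=
  match pselect (reachable x y) with
  | left h => ex_minn (P := fun n => `[< walk w n x y >])
                (let: ex_intro n hn := h in ex_intro _ n (asboolT hn))
  | right _ => 0%N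
  end.

Lemma walk_distP x y : reachable x y ->
  walk w (walk_dist x y) x y /\ forall n, walk w n x y -> (walk_dist x y <= n)%N.
Proof.
rewrite /walk_dist; case: pselect => // h _.
case: ex_minnP => k /asboolP hk kmin; split => // n hn.
exact/kmin/asboolP.
Qed.

Lemma walk_dist_min x y n : walk w n x y -> (walk_dist x y <= n)%N.
Proof. by move=> h; apply: (walk_distP (ex_intro _ n h)).2. Qed.

Lemma walk_dist_walk x y n : walk w n x y -> walk w (walk_dist x y) x y.
Proof. by move=> h; apply: (walk_distP (ex_intro _ n h)).1. Qed.

Lemma gdist_walk_dist x y : reachable x y -> gdist w x y = (walk_dist x y)%:R%:E.
Proof.
move=> xy; have [wxy dmin] := walk_distP xy.
apply/le_anti/andP; split; first by apply: ereal_inf_lbound; exists (walk_dist x y).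
by apply: le_ereal_inf_tmp => _ [n /= hn <-]; rewrite lee_fin ler_nat dmin.
Qed.

Lemma gdist_unreachable x y : ~ reachable x y -> gdist w x y = +oo%E.
Proof.
move=> xy; rewrite /gdist (_ : [set _ | n in _] = set0) ?ereal_inf0 //.
by apply/seteqP; split => // _ [n /= hn _]; apply: xy; exists n.
Qed.

Lemma walk_dist_eq0 x y n : walk w n x y -> walk_dist x y = 0%N -> x = y.
Proof. by move=> wxy d0; apply: walk0_eq; rewrite -d0; exact: walk_dist_walk wxy. Qed.

Lemma walk_dist_refl x : walk_dist x x = 0%N.
Proof. by apply/eqP; rewrite -leqn0 (walk_dist_min (walk0 _ _)). Qed.

Hypothesis w_sym : forall x y, w x y = w y x.

Lemma walk_cons n x y z : walk w n x y -> 0 < w z x -> walk w n.+1 z y.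
Proof. by move=> wxy wzx; rewrite -add1n; apply: walk_cat (edge_walk1 wzx) wxy. Qed.

Lemma walk_rev n x y : walk w n x y -> walk w n y x.
Proof.
elim=> [a|k a b c _ IH wbc]; first exact: walk0.
by apply: walk_cons IH _; rewrite w_sym.
Qed.

Lemma walkS_head n x y : walk w n.+1 x y -> exists2 z, 0 < w x z & walk w n z y.
Proof.
move=> /walk_rev h; inversion h; subst.
by exists z; [rewrite w_sym | exact: walk_rev].
Qed.

Lemma walk_dist_sym x y n : walk w n x y -> walk_dist x y = walk_dist y x.
Proof.
move=> wxy; apply/anti_leq/andP; split; apply/walk_dist_min/walk_rev.
  exact: walk_dist_walk (walk_rev wxy).
exact: walk_dist_walk wxy.
Qed.

Hypothesis w_diag : forall x, w x x = 0.

Lemma edge_neq x y : 0 < w x y -> y != x.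
Proof. by apply: contraTneq => ->; rewrite w_diag ltxx. Qed.

Lemma walk_dist_edge x y : 0 < w x y -> walk_dist x y = 1%N.
Proof.
move=> xy; have := walk_dist_min (edge_walk1 xy).
case E: (walk_dist x y) => [|[|//]] // _.
by have /eqP := edge_neq xy; rewrite (walk_dist_eq0 (edge_walk1 xy) E).
Qed.

Lemma gdist_edge x y : 0 < w x y -> gdist w x y = 1%:E.
Proof.
by move=> xy; rewrite gdist_walk_dist ?walk_dist_edge //; exists 1%N; exact: edge_walk1.
Qed.

Lemma ball1P x z : ball1 w x z <-> z = x \/ 0 < w x z.
Proof.
rewrite /ball1 /=; split; last first.
  case=> [->|/gdist_edge -> //].
  by rewrite gdist_walk_dist ?walk_dist_refl ?lee_fin //; exists 0%N; exact: walk0.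
have [xz|xz] := pselect (reachable x z); last by rewrite gdist_unreachable.
have wxz := (walk_distP xz).1.
rewrite gdist_walk_dist // lee_fin lern1; case E: (walk_dist x z) wxz => [|[|//]] wxz _.
  by left; apply/esym/walk0_eq.
by right; apply: walk1_gt0.
Qed.

Lemma sphere1P x z : sphere1 w x z <-> 0 < w x z.
Proof.
rewrite /sphere1 /=; split; last exact: gdist_edge.
have [xz|xz] := pselect (reachable x z); last by rewrite gdist_unreachable.
rewrite gdist_walk_dist // => -[] /eqP; rewrite pnatr_eq1 => /eqP d1.
by apply: walk1_gt0; rewrite -d1; exact: (walk_distP xz).1.
Qed.

Lemma gradnorm_edge_le (f : V -> R) a b :
  (gradnorm w f <= 1%:E)%E -> 0 < w a b -> f a - f b <= 1.
Proof.
move=> f_lip ab; have : ((grad w f a b)%:E <= gradnorm w f)%E.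
  by apply: ereal_sup_ubound; exists (a, b).
by move=> /le_trans /(_ f_lip); rewrite lee_fin /grad gdist_edge //= divr1.
Qed.

End Walks.

Section Plans.
Context {R : realType} {V : countType} (w : V -> V -> R) (m : V -> R).
Hypotheses (mw : mw_graph w m) (lf : locally_finite w).

Let w_ge0 x y : 0 <= w x y. Proof. by case: mw. Qed.
Let w_sym x y : w x y = w y x. Proof. by case: mw => _ []. Qed.
Let w_diag x : w x x = 0. Proof. by case: mw => _ [_ []]. Qed.
Let m_gt0 x : 0 < m x. Proof. by case: mw => _ [_ []]. Qed.

Local Notation B1 z := (fset_set (ball1 w z)).

Lemma finite_ball1 z : finite_set (ball1 w z).
Proof.
apply: (@sub_finite_set _ _ ([set z] `|` [set y | 0 < w z y])).
  by move=> y /(ball1P w_diag) [->|zy]; [left|right].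
by rewrite finite_setU; split; [exact: finite_set1 | exact: lf].
Qed.

Lemma mem_ball1 z x : x \in B1 z <-> x = z \/ 0 < w z x.
Proof. by rewrite in_fset_set ?in_setE; [exact: ball1P | exact: finite_ball1]. Qed.

Lemma ball1_center z : z \in B1 z.
Proof. by apply/mem_ball1; left. Qed.

Lemma ball1_edge z x : 0 < w z x -> x \in B1 z.
Proof. by move=> zx; apply/mem_ball1; right. Qed.

Lemma ball1_neq_edge z x : x \in B1 z -> x != z -> 0 < w z x.
Proof. by move=> /mem_ball1 [->|//]; rewrite eqxx. Qed.

Lemma walk_ball1 z x : x \in B1 z -> exists2 n, walk w n z x & (n <= 1)%N.
Proof.
move=> /mem_ball1 [->|zx]; first by exists 0%N => //; exact: walk0.
by exists 1%N => //; exact: edge_walk1.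
Qed.

Lemma fsbig_ball1 z (F : V -> R) : \sum_(x \in ball1 w z) F x = \sum_(x <- B1 z) F x.
Proof. exact/fsbig_finite/finite_ball1. Qed.

Lemma qq_ge0 x y : 0 <= qq w m x y.
Proof. by rewrite /qq divr_ge0 // ltW. Qed.

Lemma laplacianE (f : V -> R) z :
  laplacian w m f z = \sum_(y <- B1 z) qq w m z y * (f y - f z).
Proof.
rewrite /laplacian (fsbig_widen _ (ball1 w z)) ?fsbig_ball1 //.
  by move=> y zy; apply/(ball1P w_diag); right.
by move=> y [/(ball1P w_diag) [->|//] _] /=; rewrite subrr mulr0.
Qed.

Lemma transport_planE x0 y0 rho : transport_plan w m x0 y0 rho <->
  [/\ forall x y, x \in B1 x0 -> y \in B1 y0 -> 0 <= rho x y,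
      forall x, 0 < w x0 x -> \sum_(y <- B1 y0) rho x y = qq w m x0 x &
      forall y, 0 < w y0 y -> \sum_(x <- B1 x0) rho x y = qq w m y0 y].
Proof.
have inB z x : ball1 w z x <-> x \in B1 z.
  by rewrite (ball1P w_diag) mem_ball1.
rewrite /transport_plan; split.
  move=> [rho_ge0 [rho_row rho_col]]; split.
  - by move=> x y /inB xs /inB ys; exact: rho_ge0.
  - by move=> x /(sphere1P w_diag) /rho_row; rewrite fsbig_ball1.
  - by move=> y /(sphere1P w_diag) /rho_col; rewrite fsbig_ball1.
move=> [rho_ge0 rho_row rho_col]; split; [|split].
- by move=> x y /inB xs /inB ys; exact: rho_ge0.
- by move=> x /(sphere1P w_diag) /rho_row; rewrite fsbig_ball1.
- by move=> y /(sphere1P w_diag) /rho_col; rewrite fsbig_ball1.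
Qed.

Lemma plan_costE x0 y0 rho : plan_cost w x0 y0 rho =
  \sum_(x <- B1 x0) \sum_(y <- B1 y0)
     rho x y * (1 - fine (gdist w x y) / fine (gdist w x0 y0)).
Proof. by rewrite /plan_cost fsbig_ball1; apply: eq_bigr => x _; rewrite fsbig_ball1. Qed.

Lemma laplacian_plan_l x0 y0 rho f : transport_plan w m x0 y0 rho ->
  laplacian w m f x0 = \sum_(x <- B1 x0) \sum_(y <- B1 y0) rho x y * (f x - f x0).
Proof.
move=> /transport_planE [_ rho_row _]; rewrite laplacianE; apply: eq_big_seq => x xs.
have [->|xx0] := eqVneq x x0; first by rewrite subrr mulr0 big1 // => y _; rewrite mulr0.
by rewrite -big_distrl -rho_row // ball1_neq_edge.
Qed.

Lemma laplacian_plan_r x0 y0 rho f : transport_plan w m x0 y0 rho ->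
  laplacian w m f y0 = \sum_(x <- B1 x0) \sum_(y <- B1 y0) rho x y * (f y - f y0).
Proof.
move=> /transport_planE [_ _ rho_col]; rewrite laplacianE exchange_big.
apply: eq_big_seq => y ys.
have [->|yy0] := eqVneq y y0; first by rewrite subrr mulr0 big1 // => x _; rewrite mulr0.
by rewrite -big_distrl -rho_col // ball1_neq_edge.
Qed.

Section OptimalPlan.
Variables x0 y0 : V.
Hypothesis gdist_x0y0_neq0 : fine (gdist w x0 y0) != 0.

(* Candidate plans live in the product space [V * V -> R]; a transport plan
   has no constraint at [(x0, y0)], but that entry has cost coefficient [0],
   so it can be set to [0], and then every entry is bounded by the marginals. *)
Let coef x y := 1 - fine (gdist w x y) / fine (gdist w x0 y0).
Let bound (i : V * V) : R :=
  if (i.1 \in B1 x0) && (i.2 \in B1 y0) then qq w m x0 i.1 + qq w m y0 i.2 else 0.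
Let box := [set t : V * V -> R | forall i, `[0, bound i]%classic (t i)].
Let row_marginals := \bigcap_(x in [set x | 0 < w x0 x])
  [set t : V * V -> R | \sum_(y <- B1 y0) t (x, y) = qq w m x0 x].
Let col_marginals := \bigcap_(y in [set y | 0 < w y0 y])
  [set t : V * V -> R | \sum_(x <- B1 x0) t (x, y) = qq w m y0 y].
Let feasible := box `&` (row_marginals `&` col_marginals).
Let cost (t : V * V -> R) := \sum_(x <- B1 x0) \sum_(y <- B1 y0) t (x, y) * coef x y.

Let in_box t : box t <-> forall i, 0 <= t i <= bound i.
Proof. by split => t_box i; have := t_box i; rewrite /= in_itv. Qed.

Let closed_sum_eq (s : seq V) (g : V -> V * V) (a : R) :
  closed [set t : V * V -> R | \sum_(y <- s) t (g y) = a].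
Proof.
apply: (@preimage_closed _ _ (fun t : V * V -> R => \sum_(y <- s) t (g y)) [set a]).
  by move=> t _; apply: continuous_sum => y; exact: (@proj_continuous _ (fun _ => R)).
exact: closed_eq.
Qed.

Let compact_feasible : compact feasible.
Proof.
apply: compact_closedI.
  apply: (@tychonoff _ (fun _ => R) (fun i => `[0, bound i]%classic)) => i.
  exact: segment_compact.
apply: closedI; apply: closed_bigI => z _; exact: closed_sum_eq.
Qed.

Let continuous_cost : continuous cost.
Proof.
apply: continuous_sum => x; apply: continuous_sum => y t.
change {for t, continuous ((fun t : V * V -> R => t (x, y)) \* cst (coef x y))}.
apply: continuousM; last exact: cst_continuous.
exact: (@proj_continuous _ (fun _ => R)).
Qed.

Let trivial_plan (i : V * V) : R :=
  if (i.1 \in B1 x0) && (i.2 \in B1 y0) then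
    (if i.2 == y0 then qq w m x0 i.1 else 0) + (if i.1 == x0 then qq w m y0 i.2 else 0)
  else 0.

Let feasible_trivial_plan : feasible trivial_plan.
Proof.
split; [|split].
- apply/in_box => i; rewrite /trivial_plan /bound; case: ifP => _; last by rewrite lexx.
  by rewrite addr_ge0 ?lerD //; case: ifP; rewrite ?qq_ge0.
- move=> x x0x /=; rewrite big_seq (eq_bigr (fun y => if y == y0 then qq w m x0 x else 0)).
    by rewrite -big_seq sum_pick ?fset_uniq ?ball1_center.
  move=> y ys; rewrite /trivial_plan /= ball1_edge // ys /=.
  by rewrite (negbTE (edge_neq w_diag x0x)) addr0.
- move=> y y0y /=; rewrite big_seq (eq_bigr (fun x => if x == x0 then qq w m y0 y else 0)).
    by rewrite -big_seq sum_pick ?fset_uniq ?ball1_center.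
  move=> x xs; rewrite /trivial_plan /= xs ball1_edge //=.
  by rewrite (negbTE (edge_neq w_diag y0y)) add0r.
Qed.

Let truncate (rho : V -> V -> R) (i : V * V) : R :=
  if [&& i.1 \in B1 x0, i.2 \in B1 y0 & i != (x0, y0)] then rho i.1 i.2 else 0.

Let cost_truncate rho : cost (truncate rho) = plan_cost w x0 y0 rho.
Proof.
rewrite plan_costE; apply: eq_big_seq => x xs; apply: eq_big_seq => y ys.
rewrite /truncate /coef /= xs ys /=; case: ((x, y) =P (x0, y0)) => [[-> ->]|//].
by rewrite divff // subrr !mulr0.
Qed.

Let feasible_truncate rho : transport_plan w m x0 y0 rho -> feasible (truncate rho).
Proof.
move=> /transport_planE [rho_ge0 rho_row rho_col]; split; [|split].
- apply/in_box => -[x y]; rewrite /truncate /bound /=.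
  case: ifP => [/and3P[xs ys xy_neq]|_]; last first.
    by rewrite lexx /=; case: ifP => _; rewrite // addr_ge0 ?qq_ge0.
  rewrite xs ys rho_ge0 //=.
  have [xx0|xx0] := eqVneq x x0.
    have yy0 : y != y0 by apply: contraNneq xy_neq => ->; rewrite xx0.
    rewrite -(rho_col y) ?ball1_neq_edge // ler_wpDl ?qq_ge0 //.
    by rewrite (ler_sum_term (F := rho^~ y)) ?fset_uniq // => z zs; exact: rho_ge0.
  rewrite -(rho_row x) ?ball1_neq_edge // ler_wpDr ?qq_ge0 //.
  by rewrite (ler_sum_term (F := rho x)) ?fset_uniq // => z zs; exact: rho_ge0.
- move=> x x0x /=; rewrite -(rho_row x x0x) big_seq [RHS]big_seq; apply: eq_bigr => y ys.
  by rewrite /truncate /= ball1_edge // ys /= xpair_eqE (negbTE (edge_neq w_diag x0x)).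
- move=> y y0y /=; rewrite -(rho_col y y0y) big_seq [RHS]big_seq; apply: eq_bigr => x xs.
  by rewrite /truncate /= xs ball1_edge //= xpair_eqE (negbTE (edge_neq w_diag y0y)) andbF.
Qed.

Lemma exists_optimal_plan : exists rho, optimal_plan w m x0 y0 rho.
Proof.
have [c /set_mem [/in_box c_box [c_row c_col]] c_max] :=
  compact_EVT_max (ex_intro _ _ feasible_trivial_plan) compact_feasible
    (continuous_subspaceT continuous_cost).
have c_plan : transport_plan w m x0 y0 (fun x y => c (x, y)).
  apply/transport_planE; split=> [x y _ _|x /c_row|y /c_col] //.
  by have /andP[] := c_box (x, y).
exists (fun x y => c (x, y)); split => // rho rho_plan.
by rewrite -cost_truncate plan_costE; apply/c_max/mem_set/feasible_truncate.
Qed.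

End OptimalPlan.

Definition row_plan (a : V) (g : V -> R) (x y : V) : R := if x == a then g y else 0.

Section Geodesic.
Variables (x0 y0 : V) (k : nat).
Hypotheses (walk_x0y0 : walk w k.+1 x0 y0) (walk_dist_x0y0 : walk_dist w x0 y0 = k.+1).

Lemma gdist_x0y0 : gdist w x0 y0 = k.+1%:R%:E.
Proof. by rewrite gdist_walk_dist ?walk_dist_x0y0 //; exists k.+1. Qed.

Lemma walk_balls x y : x \in B1 x0 -> y \in B1 y0 ->
  exists2 n, walk w n x y & (n <= k.+3)%N.
Proof.
move=> /walk_ball1 [a x0x a_le1] /walk_ball1 [b y0y b_le1].
exists (a + k.+1 + b)%N; last lia.
exact/(walk_cat _ y0y)/walk_cat/walk_x0y0/walk_rev.
Qed.

Lemma gdist_balls x y : x \in B1 x0 -> y \in B1 y0 ->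
  gdist w x y = (walk_dist w x y)%:R%:E.
Proof.
by move=> xs ys; have [n xy _] := walk_balls xs ys; apply: gdist_walk_dist; exists n.
Qed.

Lemma walk_dist_balls x y : x \in B1 x0 -> y \in B1 y0 -> (walk_dist w x y <= k.+3)%N.
Proof.
by move=> xs ys; have [n xy n_le] := walk_balls xs ys; rewrite (leq_trans (walk_dist_min xy)).
Qed.

Lemma walk_dist_x0_ball y : y \in B1 y0 -> (walk_dist w x0 y <= k.+2)%N.
Proof.
move=> /walk_ball1 [b y0y b_le1].
by rewrite (leq_trans (walk_dist_min (walk_cat walk_x0y0 y0y))) //; lia.
Qed.

Definition scaled_cost (rho : V -> V -> R) :=
  \sum_(x <- B1 x0) \sum_(y <- B1 y0) rho x y * (k.+1%:R - (walk_dist w x y)%:R).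

Lemma plan_cost_scaled rho : plan_cost w x0 y0 rho * k.+1%:R = scaled_cost rho.
Proof.
rewrite plan_costE big_distrl; apply: eq_big_seq => x xs.
rewrite big_distrl; apply: eq_big_seq => y ys.
by rewrite gdist_x0y0 gdist_balls //= -mulrA mulrBl mul1r divfK // pnatr_eq0.
Qed.

Lemma scaled_costD rho1 rho2 :
  scaled_cost (fun x y => rho1 x y + rho2 x y) = scaled_cost rho1 + scaled_cost rho2.
Proof.
rewrite -big_split; apply: eq_bigr => x _.
by rewrite -big_split; apply: eq_bigr => y _; rewrite mulrDl.
Qed.

Lemma scaled_cost_row a g : a \in B1 x0 ->
  scaled_cost (row_plan a g) = \sum_(y <- B1 y0) g y * (k.+1%:R - (walk_dist w a y)%:R).
Proof.
move=> as0; rewrite -[RHS](@sum_pick _ _ (B1 x0) a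
  (fun x => \sum_(y <- B1 y0) g y * (k.+1%:R - (walk_dist w x y)%:R))) ?fset_uniq //.
apply: eq_bigr => x _; rewrite /row_plan; case: eqP => // _.
by rewrite big1 // => y _; rewrite mul0r.
Qed.

Lemma scaled_cost_le_laplacian rho f : transport_plan w m x0 y0 rho ->
  grad w f y0 x0 = 1 -> gradnorm w f = 1%:E ->
  scaled_cost rho <= laplacian w m f x0 - laplacian w m f y0.
Proof.
move=> rho_plan grad_y0x0 gradnorm_f.
have /transport_planE [rho_ge0 _ _] := rho_plan.
have f_y0x0 : f y0 - f x0 = k.+1%:R.
  move: grad_y0x0; rewrite /grad gdist_walk_dist; last by exists k.+1; exact: walk_rev.
  rewrite -(walk_dist_sym w_sym walk_x0y0) walk_dist_x0y0 /=.
  by move/(congr1 ( *%R^~ k.+1%:R)); rewrite divfK ?mul1r // pnatr_eq0.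
have f_lip n x y : walk w n x y -> f y - f x <= n%:R.
  by apply: walk_lipschitz => a b ab; apply: gradnorm_edge_le; rewrite ?gradnorm_f // w_sym.
rewrite (laplacian_plan_l f rho_plan) (laplacian_plan_r f rho_plan) -sumrB /scaled_cost.
rewrite big_seq_cond [X in _ <= X]big_seq_cond; apply: ler_sum => x /andP[xs _].
rewrite -sumrB big_seq_cond [X in _ <= X]big_seq_cond; apply: ler_sum => y /andP[ys _].
rewrite -mulrBr ler_wpM2l ?rho_ge0 //.
have [n xy _] := walk_balls xs ys.
have := f_lip _ _ _ (walk_dist_walk xy); lra.
Qed.

Lemma scaled_cost_le_gdist_kappa rho : transport_plan w m x0 y0 rho ->
  ((scaled_cost rho)%:E <= gdist w x0 y0 * kappa w m x0 y0)%E.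
Proof.
move=> rho_plan; have k1_gt0 : 0 < k.+1%:R :> R by rewrite ltr0n.
rewrite gdist_x0y0 -[scaled_cost rho](@divfK _ k.+1%:R) ?gt_eqF // mulrC EFinM.
apply: lee_wpmul2l; first by rewrite lee_fin ler0n.
apply: le_ereal_inf_tmp => _ [f [grad_f gradnorm_f] <-].
rewrite lee_fin /grad gdist_x0y0 /= ler_pM2r ?invr_gt0 //.
exact: scaled_cost_le_laplacian.
Qed.

Definition far_mass (rho : V -> V -> R) :=
  \sum_(x <- B1 x0) \sum_(y <- B1 y0 | (k.+1 < walk_dist w x y)%N) rho x y.

Lemma far_massE rho :
  \sum_(x \in ball1 w x0)
    \sum_(y \in [set y | ball1 w y0 y /\ (gdist w x0 y0 < gdist w x y)%E]) rho x y
  = far_mass rho.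
Proof.
rewrite fsbig_ball1; apply: eq_big_seq => x xs.
rewrite (_ : [set y | _ /\ _] = ball1 w y0 `&` [set y | (gdist w x0 y0 < gdist w x y)%E]) //.
rewrite fsbig_mkcondr fsbig_ball1 [RHS]big_mkcond; apply: eq_big_seq => y ys.
rewrite (_ : y \in _ = (gdist w x0 y0 < gdist w x y)%E); last first.
  by apply/idP/idP => [/set_mem|/mem_set].
by rewrite gdist_x0y0 gdist_balls // lte_fin ltr_nat.
Qed.

Section Neighbour.
Variable x1 : V.
Hypotheses (x0x1 : 0 < w x0 x1) (walk_x1y0 : walk w k x1 y0).

Let x1_ball : x1 \in B1 x0. Proof. exact: ball1_edge. Qed.
Let x1_neq_x0 : x1 != x0. Proof. exact: edge_neq. Qed.

Lemma walk_dist_x1_ball y : y \in B1 y0 -> (walk_dist w x1 y <= k.+1)%N.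
Proof.
move=> /walk_ball1 [b y0y b_le1].
by rewrite (leq_trans (walk_dist_min (walk_cat walk_x1y0 y0y))) //; lia.
Qed.

Definition far_from_x1 y := (y \in B1 y0) && (walk_dist w x1 y == k.+1).

Definition far_part (rho : V -> V -> R) y := if far_from_x1 y then rho x1 y else 0.

Definition shift_plan (rho : V -> V -> R) x y :=
  rho x y
  + row_plan x1 (fun y => (if y == y0 then \sum_(z <- B1 y0) far_part rho z else 0)
                          - far_part rho y) x y
  + row_plan x0 (far_part rho) x y.

Lemma shift_plan_transport rho :
  transport_plan w m x0 y0 rho -> transport_plan w m x0 y0 (shift_plan rho).
Proof.
move=> /transport_planE [rho_ge0 rho_row rho_col].
have part_ge0 y : 0 <= far_part rho y.
  by rewrite /far_part; case: ifP => // /andP[ys _]; exact: rho_ge0.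
have part_le y : y \in B1 y0 -> far_part rho y <= rho x1 y.
  by move=> ys; rewrite /far_part; case: ifP; rewrite ?rho_ge0.
have mass_ge0 : 0 <= \sum_(z <- B1 y0) far_part rho z by exact: sumr_ge0.
apply/transport_planE; split.
- move=> x y xs ys; rewrite /shift_plan /row_plan.
  have [->|xx1] := eqVneq x x1.
    rewrite (negbTE x1_neq_x0) addr0.
    by have := part_le y ys; have := rho_ge0 _ _ x1_ball ys; case: (y == y0); lra.
  by have := rho_ge0 _ _ xs ys; have := part_ge0 y; case: (x == x0); lra.
- move=> x x0x; rewrite /shift_plan /row_plan !big_split /= rho_row //.
  rewrite (negbTE (edge_neq w_diag x0x)) [X in _ + X]big1 // addr0.
  have [_|_] := eqVneq x x1; last by rewrite big1 ?addr0.
  by rewrite sumrB sum_pick ?fset_uniq ?ball1_center // subrr addr0.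
- move=> y y0y; rewrite /shift_plan /row_plan !big_split /= rho_col //.
  rewrite (negbTE (edge_neq w_diag y0y)) sub0r.
  by rewrite !sum_pick ?fset_uniq ?ball1_center // subrK.
Qed.

Lemma scaled_cost_shift_plan rho : transport_plan w m x0 y0 rho ->
  scaled_cost rho <= scaled_cost (shift_plan rho).
Proof.
move=> /transport_planE [rho_ge0 _ _].
rewrite /shift_plan !scaled_costD !scaled_cost_row ?ball1_center // -addrA lerDl.
set M := \sum_(z <- B1 y0) far_part rho z.
rewrite (eq_bigr (fun y => (if y == y0 then M * (k.+1%:R - (walk_dist w x1 y0)%:R) else 0)
  - far_part rho y * (k.+1%:R - (walk_dist w x1 y)%:R))); last first.
  by move=> y _; rewrite mulrBl; case: eqP => [->|]; rewrite ?mul0r.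
rewrite sumrB sum_pick ?fset_uniq ?ball1_center // /M big_distrl.
rewrite -sumrB -big_split /= big_seq.
apply: sumr_ge0 => y ys; rewrite -mulrBr -mulrDr /far_part.
case: ifP => [/andP[_ /eqP far_y]|_]; last by rewrite mul0r.
rewrite mulr_ge0 ?rho_ge0 // far_y.
have : (walk_dist w x1 y0)%:R <= k%:R :> R by rewrite ler_nat walk_dist_min.
have : (walk_dist w x0 y)%:R <= k%:R + 2 :> R.
  by rewrite -natrD ler_nat addn2 walk_dist_x0_ball.
rewrite -natr1; lra.
Qed.

Lemma shift_plan_far rho y : far_from_x1 y -> shift_plan rho x1 y = 0.
Proof.
move=> far_y; rewrite /shift_plan /row_plan eqxx (negbTE x1_neq_x0) addr0 /far_part far_y.
have -> : (y == y0) = false.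
  apply: contraTF far_y => /eqP ->.
  by rewrite /far_from_x1 ltn_eqF ?andbF // ltnS walk_dist_min.
by rewrite sub0r addrN.
Qed.

Lemma exists_optimal_plan_far_free rho : optimal_plan w m x0 y0 rho ->
  exists2 r, optimal_plan w m x0 y0 r & forall y, far_from_x1 y -> r x1 y = 0.
Proof.
move=> [rho_plan rho_max]; exists (shift_plan rho); last exact: shift_plan_far.
split=> [|r r_plan]; first exact: shift_plan_transport.
apply: le_trans (rho_max _ r_plan) _.
rewrite -(@ler_pM2r _ k.+1%:R) ?ltr0n // !plan_cost_scaled.
exact: scaled_cost_shift_plan.
Qed.

Lemma qq_le_scaled_cost_far_mass r : transport_plan w m x0 y0 r ->
  (forall y, far_from_x1 y -> r x1 y = 0) ->
  qq w m x0 x1 <= scaled_cost r + 2 * far_mass r.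
Proof.
move=> r_plan r_far; have /transport_planE [r_ge0 r_row _] := r_plan.
pose T x y := r x y * (k.+1%:R - (walk_dist w x y)%:R)
  + 2 * (if (k.+1 < walk_dist w x y)%N then r x y else 0).
have -> : scaled_cost r + 2 * far_mass r = \sum_(x <- B1 x0) \sum_(y <- B1 y0) T x y.
  rewrite mulr_sumr -big_split; apply: eq_bigr => x _.
  rewrite /= mulr_sumr [X in _ + X]big_mkcond -big_split; apply: eq_bigr => y _.
  by rewrite /T; case: ifP; rewrite ?mulr0.
have T_ge0 x y : x \in B1 x0 -> y \in B1 y0 -> 0 <= T x y.
  move=> xs ys; have := r_ge0 _ _ xs ys; have := walk_dist_balls xs ys.
  rewrite /T; case: ltnP => [_ d_le|d_le _].
    have : (walk_dist w x y)%:R <= k.+1%:R + 2 :> R by rewrite -natrD ler_nat addn2.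
    nra.
  have : (walk_dist w x y)%:R <= k.+1%:R :> R by rewrite ler_nat.
  nra.
have T_x1 y : y \in B1 y0 -> r x1 y <= T x1 y.
  move=> ys; have := r_ge0 _ _ x1_ball ys.
  rewrite /T; have [/r_far ->|near_y] := boolP (far_from_x1 y).
    by rewrite !mul0r if_same mulr0 addr0.
  have d_le : (walk_dist w x1 y <= k)%N.
    by move: near_y (walk_dist_x1_ball ys); rewrite /far_from_x1 ys /=; lia.
  rewrite ltnNge (leq_trans d_le) // mulr0 addr0.
  have : (walk_dist w x1 y)%:R <= k%:R :> R by rewrite ler_nat.
  rewrite -natr1; nra.
apply: le_trans (_ : \sum_(y <- B1 y0) T x1 y <= _).
  rewrite -(r_row x1 x0x1) big_seq [X in _ <= X]big_seq; exact: ler_sum.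
apply: (ler_sum_term (F := fun x => \sum_(y <- B1 y0) T x y)) => // [|x xs].
  exact: fset_uniq.
by rewrite big_seq; apply: sumr_ge0 => y ys; exact: T_ge0.
Qed.

End Neighbour.
End Geodesic.
End Plans.

Theorem lemma2p2 (R : realType) (V : countType) (w : V -> V -> R) (m : V -> R)
  (x0 y0 : V) (eps : R) :
  mw_graph w m -> locally_finite w ->
  x0 <> y0 -> (gdist w x0 y0 < +oo)%E ->
  0 < eps -> (gdist w x0 y0 * kappa w m x0 y0 <= eps%:E)%E ->
  exists rho : V -> V -> R,
    optimal_plan w m x0 y0 rho /\
    (qmin w m - eps%:E <=
       2%:E * (\sum_(x \in ball1 w x0) \sum_(y \in [set y | ball1 w y0 y /\ (gdist w x0 y0 < gdist w x y)%E])
                 rho x y)%:E)%E.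
Proof.
move=> mw lf x0_neq_y0 gdist_fin _ kappa_le_eps.
have w_sym : forall x y, w x y = w y x by case: mw => _ [].
have [n walk_n] : reachable w x0 y0.
  by apply: contrapT => /gdist_unreachable gdist_oo; rewrite gdist_oo ltxx in gdist_fin.
have walk_d := walk_dist_walk walk_n.
case d_eq : (walk_dist w x0 y0) walk_d => [|k] walk_d.
  by case: x0_neq_y0; exact: walk_dist_eq0 walk_n d_eq.
have [x1 x0x1 walk_x1y0] := walkS_head w_sym walk_d.
have gdist_neq0 : fine (gdist w x0 y0) != 0 by rewrite (gdist_x0y0 walk_d d_eq) pnatr_eq0.
have [rho0 /(exists_optimal_plan_far_free mw lf walk_d d_eq x0x1 walk_x1y0) [r r_opt r_far]] :=
  exists_optimal_plan mw lf gdist_neq0.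
exists r; split => //; rewrite (far_massE mw lf walk_d d_eq).
have q_le := qq_le_scaled_cost_far_mass mw lf walk_d d_eq x0x1 walk_x1y0 r_opt.1 r_far.
have cost_le : scaled_cost w x0 y0 k r <= eps.
  by rewrite -lee_fin (le_trans _ kappa_le_eps) ?scaled_cost_le_gdist_kappa //; case: r_opt.
have qmin_le : (qmin w m <= (qq w m x0 x1)%:E)%E by apply: ereal_inf_lbound; exists (x0, x1).
apply: le_trans (leeB qmin_le (lexx eps%:E)) _.
by rewrite -EFinB -EFinM lee_fin; lra.
Qed.
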